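(* Let $N_{v_1},\dots,N_{v_k}$ be positive integers and $N_u$ a nonnegative integer, and let $N_u^1,\dots,N_u^k$ be computed by the following procedure: set $\Delta\gets0$; for $i=1,\dots,k$, let $x=\frac{N_{v_i}}{\sum_{j=1}^kN_{v_j}}\cdot N_u$; if $\Delta\ge x-\lfloor x\rfloor$, set $N_u^i\gets\lfloor x\rfloor$ and $\Delta\gets\Delta-(x-\lfloor x\rfloor)$; otherwise set $N_u^i\gets\lfloor x\rfloor+1$ and $\Delta\gets\Delta+1-(x-\lfloor x\rfloor)$. Then: (1) for every $i\in\{1,\dots,k\}$, $\sum_{j=1}^iN_u^j-1\le\frac{\sum_{j=1}^iN_{v_j}}{\sum_{j=1}^kN_{v_j}}\cdot N_u\le\sum_{j=1}^iN_u^j$; (2) for all $i_1,i_2\in\{1,\dots,k\}$ with $i_1<i_2$, $\sum_{j=i_1}^{i_2}N_u^j\le\frac{\sum_{j=i_1}^{i_2}N_{v_j}}{\sum_{j=1}^kN_{v_j}}\cdot N_u+1$; (3) $\sum_{j=1}^kN_u^j\ge N_u$. *)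

From mathcomp Require Import all_boot all_order all_algebra.
Set Implicit Arguments. Unset Strict Implicit. Unset Printing Implicit Defensive.
Import Order.TTheory GRing.Theory Num.Theory.
Local Open Scope ring_scope.

Fixpoint alloc_aux (Nv : seq nat) (S Nu : nat) (D : rat) : seq int :=
  match Nv with
  | [::] => [::]
  | v :: vs =>
      let x : rat := (v%:R / S%:R) * Nu%:R in
      let fl := Num.floor x in
      let f := x - fl%:~R in
      if f <= D then fl :: alloc_aux vs S Nu (D - f)
      else (fl + 1) :: alloc_aux vs S Nu (D + 1 - f)
  end.

Definition alloc (Nv : seq nat) (Nu : nat) : seq int :=
  alloc_aux Nv (\sum_(v <- Nv) v)%N Nu 0.

From mathcomp Require Import all_boot all_order all_algebra.
From mathcomp Require Import lra.
Import Order.TTheory GRing.Theory Num.Theory.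
Local Open Scope ring_scope.

(* The running value Delta always lies in [0, 1): with f = x - floor x, the
   procedure subtracts f when Delta >= f and adds 1 - f when Delta < f.  Since
   Delta - D is exactly the excess of the allocated prefix sum over the exact
   prefix share, every prefix sum of the allocation exceeds the exact share by
   less than 1; the three claims are read off this invariant. *)

Lemma alloc_aux_prefix_sum (Nv : seq nat) (S Nu : nat) (D : rat) :
  0 <= D < 1 -> forall i : nat, exists2 d : rat, 0 <= d < 1 &
  \sum_(0 <= j < i) (nth 0%Z (alloc_aux Nv S Nu D) j)%:~R =
  \sum_(0 <= j < i) ((nth 0%N Nv j)%:R / S%:R * Nu%:R) + d - D.
Proof.
elim: Nv D => [|v vs IH] D /andP[D_ge0 D_lt1] [|i].
- by exists D; [apply/andP | rewrite !big_geq // add0r subrr].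
- exists D; first exact/andP.
  by rewrite !big1 ?addrK // => j _; rewrite nth_nil ?mul0r.
- by exists D; [apply/andP | rewrite !big_geq // add0r subrr].
rewrite !big_nat_recl //=.
set x := v%:R / S%:R * Nu%:R.
have /andP[fl_le fl_gt] := floor_itv x.
rewrite intrD -[1%:~R]/(1 : rat) in fl_gt.
case: ifP => f_le_D /=.
  have [|d d_itv ->] := IH (D - (x - (Num.floor x)%:~R)) _ i.
    by apply/andP; split; lra.
  by exists d => //; lra.
have D_lt_f : D < x - (Num.floor x)%:~R by rewrite ltNge f_le_D.
have [|d d_itv ->] := IH (D + 1 - (x - (Num.floor x)%:~R)) _ i.
  by apply/andP; split; lra.
by exists d => //; rewrite intrD -[1%:~R]/(1 : rat); lra.
Qed.

Lemma alloc_prefix_sum (Nv : seq nat) (Nu i : nat) :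
  exists2 d : rat, 0 <= d < 1 &
  \sum_(0 <= j < i) (nth 0%Z (alloc Nv Nu) j)%:~R =
  (\sum_(0 <= j < i) nth 0%N Nv j)%:R / (\sum_(v <- Nv) v)%:R * Nu%:R + d.
Proof.
have [|d d_itv ->] := @alloc_aux_prefix_sum Nv (\sum_(v <- Nv) v)%N Nu 0 _ i.
  by rewrite lexx ltr01.
by exists d => //; rewrite subr0 -!mulr_suml -natr_sum.
Qed.

Lemma interval_sum_lt_add1 (R : realDomainType) (F G : nat -> R) :
  (forall i, exists2 d : R, 0 <= d < 1 &
     \sum_(0 <= j < i) F j = \sum_(0 <= j < i) G j + d) ->
  forall m n, (m <= n)%N -> \sum_(m <= j < n) F j < \sum_(m <= j < n) G j + 1.
Proof.
move=> prefix m n le_mn.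
have [dm /andP[dm_ge0 dm_lt1] Fm] := prefix m.
have [dn /andP[dn_ge0 dn_lt1] Fn] := prefix n.
rewrite !(big_cat_nat (leq0n m) le_mn) /= Fm in Fn.
lra.
Qed.

Theorem lemma9 (Nv : seq nat) (Nu : nat) :
  (0 < size Nv)%N -> all (fun v => 0 < v)%N Nv ->
  let k := size Nv in
  let S : rat := (\sum_(j < k) (nth 0%N Nv j))%:R in
  let a (j : nat) : rat := (nth 0%Z (alloc Nv Nu) j)%:~R in
  (forall i : nat, (1 <= i <= k)%N ->
     (\sum_(0 <= j < i) a j) - 1 <= (\sum_(0 <= j < i) nth 0%N Nv j)%:R / S * Nu%:R
     /\ (\sum_(0 <= j < i) nth 0%N Nv j)%:R / S * Nu%:R <= \sum_(0 <= j < i) a j)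
  /\ (forall i1 i2 : nat, (1 <= i1)%N -> (i1 < i2)%N -> (i2 <= k)%N ->
     \sum_(i1.-1 <= j < i2) a j
       <= (\sum_(i1.-1 <= j < i2) nth 0%N Nv j)%:R / S * Nu%:R + 1)
  /\ Nu%:R <= \sum_(0 <= j < k) a j.
Proof.
move=> Nv_ne0 Nv_pos k S a.
have S_Nv : S = (\sum_(v <- Nv) v)%:R by rewrite /S (big_nth 0%N) big_mkord.
have S_neq0 : S != 0.
  rewrite S_Nv pnatr_eq0 -lt0n.
  case: Nv Nv_ne0 Nv_pos {k S a S_Nv} => // v vs _ /andP[v_gt0 _].
  by rewrite big_cons addn_gt0 v_gt0.
have share_sum m n : (\sum_(m <= j < n) nth 0%N Nv j)%:R / S * Nu%:R =
    \sum_(m <= j < n) ((nth 0%N Nv j)%:R / S * Nu%:R).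
  by rewrite natr_sum !mulr_suml.
have prefix i : exists2 d : rat, 0 <= d < 1 & \sum_(0 <= j < i) a j =
    (\sum_(0 <= j < i) nth 0%N Nv j)%:R / S * Nu%:R + d.
  by rewrite S_Nv; apply: alloc_prefix_sum.
split; [|split].
- move=> i _; have [d /andP[d_ge0 d_lt1] ->] := prefix i.
  by split; lra.
- move=> i1 i2 _ lt_i12 _; rewrite share_sum; apply/ltW/interval_sum_lt_add1.
    by move=> i; rewrite -share_sum; apply: prefix.
  by rewrite (leq_trans (leq_pred i1)) // ltnW.
- have [d /andP[d_ge0 _] ->] := prefix k.
  rewrite /S big_mkord divff // mul1r; lra.
Qed.
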